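(* Let $P\subseteq \mathbb{P}^{n-1}$ be a full-dimensional polytope, let $1\le k\le n$, and let $\mathrm{C}_P^k=(C_{G_1},\ldots,C_{G_f})$ be the vector of Chow forms of $P$, where $f$ is the number of $(n-k-1)$-dimensional faces of $P$. Then for every $V\in \mathrm{Gr}(k,n)$ the vector $\mathrm{C}_P^k(V)$ is not the zero vector, and its evaluations at different representatives of $V$ differ by a nonzero scalar multiple; hence $\mathrm{C}_P^k(V)$ is a well-defined point of $\mathbb{P}^{f-1}$.
   Context: Work over $\mathbb{R}$. $\mathrm{Gr}(k,n)$ is the Grassmannian of $k$-dimensional linear subspaces of $\mathbb{R}^n$; a linear subspace is identified with its image in $\mathbb{P}^{n-1}$, but dimensions of subspaces are always those in $\mathbb{R}^n$. A polytope $P\subseteq\mathbb{P}^{n-1}$ is the image in $\mathbb{P}^{n-1}$ of a cone $\{\sum_{i=1}^m c_iv_i : c_i\ge 0\}$ for finitely many $v_1,\ldots,v_m\in\mathbb{R}^n$ (equivalently, the projectivization of the cone over a polytope lying in an affine hyperplane not through the origin); its faces and their dimensions are those of this polytope. For $V\in\mathrm{Gr}(k,n)$ and $I\in\binom{[n]}{n-k}$, the primal Plücker coordinate $p_I(V)$ is the maximal minor on columns $I$ of an $(n-k)\times n$ matrix $N$ with $V=\ker N$ (well defined up to a common nonzero scalar). For an $(n-k)\times n$ matrix $M$, $q_I(M)$ denotes its maximal minor on columns $I$. Vector of Chow forms: fix an ordering $G_1,\ldots,G_f$ of the $(n-k-1)$-dimensional faces of $P$; for each $G_i$ choose $n-k$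 linearly independent vertices (as vectors in $\mathbb{R}^n$) $v^i_1,\ldots,v^i_{n-k}$ of $G_i$ and let $M^i$ be the $(n-k)\times n$ matrix with rows $v^i_1,\ldots,v^i_{n-k}$ in this order. The Chow form of $G_i$ is $C_{G_i}(V)=\sum_{I\in\binom{[n]}{n-k}} q_I(M^i)\,p_I(V)$; it vanishes exactly when $V$ meets the linear span of $G_i$ nontrivially. The vector of Chow forms is $\mathrm{C}_P^k=(C_{G_1},\ldots,C_{G_f})$. *)

From HB Require Import structures.
From mathcomp Require Import all_boot all_order all_algebra.
Set Implicit Arguments. Unset Strict Implicit. Unset Printing Implicit Defensive.
Import Order.TTheory GRing.Theory Num.Theory.
Local Open Scope ring_scope.

Section Chow.
Variable R : realFieldType.

(* The polytope P is the projectivization of the cone generated by the rows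
   v_i = row i A of A : 'M_(m,n).  It is the cone over a polytope lying in an
   affine hyperplane {l = 1} not through the origin: every nonzero generator
   takes a positive value on l. *)
Definition pointed_gens (m n : nat) (A : 'M[R]_(m, n)) : Prop :=
  exists l : 'cV[R]_n, forall i : 'I_m, row i A != 0 -> 0 < (row i A *m l) 0 0.

Definition full_dim (m n : nat) (A : 'M[R]_(m, n)) : Prop := \rank A = n.

(* Faces of P correspond to faces of the cone, i.e. intersections of the cone
   with supporting hyperplanes {l' = 0}, l' >= 0 on the cone (l' = 0 gives P
   itself, a strictly positive l' gives the empty face / the apex).  A face is
   recorded by the set of indices of generators lying in it; this determines
   the face (the face is the cone over these generators). *)
Definition is_face (m n : nat) (A : 'M[R]_(m, n)) (S : {set 'I_m}) : Prop :=
  exists l : 'cV[R]_n,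
    (forall i : 'I_m, 0 <= (row i A *m l) 0 0) /\
    S = [set i : 'I_m | (row i A *m l) 0 0 == 0].

(* dimension of the linear span of a face; the face (as a subset of P^{n-1})
   has dimension face_rank - 1. *)
Definition face_rank (m n : nat) (A : 'M[R]_(m, n)) (S : {set 'I_m}) : nat :=
  \rank (\matrix_(i < m) (if i \in S then row i A else 0)).

Definition is_vertex_vec (m n : nat) (A : 'M[R]_(m, n)) (S : {set 'I_m})
    (w : 'rV[R]_n) : Prop :=
  exists T : {set 'I_m}, [/\ is_face A T, face_rank A T = 1%N, T \subset S &
    exists j : 'I_m, exists c : R,
      [/\ j \in T, row j A != 0, c != 0 & w = c *: row j A]].

Definition colsel (n : nat) (I : {set 'I_n}) (j : nat) : option 'I_n :=
  nth None [seq Some c | c <- enum I] j.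

Definition minor (p n : nat) (M : 'M[R]_(p, n)) (I : {set 'I_n}) : R :=
  \det (\matrix_(i < p, j < p)
          (if colsel I j is Some c then M i c else 0)).

(* primal Pluecker coordinate p_I(V) computed from a matrix N with V = ker N *)
Definition pluecker (p n : nat) (N : 'M[R]_(p, n)) (I : {set 'I_n}) : R :=
  minor N I.

(* kernel of N : 'M_(p,n) (column kernel), as a row space: u with N u^T = 0,
   i.e. u *m N^T = 0 *)
Definition kerN (p n : nat) (N : 'M[R]_(p, n)) : 'M[R]_n := kermx N^T.

Definition chow_form (p n : nat) (M N : 'M[R]_(p, n)) : R :=
  \sum_(I : {set 'I_n} | #|I| == p) minor M I * pluecker N I.

Definition chow_choice (m n k : nat) (A : 'M[R]_(m, n))
    (M : {set 'I_m} -> 'M[R]_(n - k, n)) : Prop :=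
  forall S : {set 'I_m}, is_face A S -> face_rank A S = (n - k)%N ->
    row_free (M S) /\ forall r : 'I_(n - k), is_vertex_vec A S (row r (M S)).

End Chow.

(* By Cauchy-Binet, C_G(V) = det (M^G N^T) for V = ker N.  Two matrices with
   kernel V differ by an invertible factor on the left, which scales every
   Chow form by its determinant; and det (M^G N^T) <> 0 as soon as the linear
   span of G meets V trivially.  So it suffices to find a face of rank n - k
   whose span, together with V, spans R^n.  Start with P itself (full
   dimensional).  If a face F with this property has rank > n - k, its span
   contains some w <> 0 of V.  Pick q positive on the cone with w q <> 0; a
   vertex g of the polyhedron {l >= 0 on F : l = q on V} is still transversal
   (its tight generators and V span R^n) and has w g = w q <> 0, so it cuts
   out a proper subface of F with the same property. *)

From HB Require Import structures.
From mathcomp Require Import all_boot all_order all_algebra.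
From mathcomp Require Import fingroup perm.
From mathcomp Require Import zify ring lra.
Set Implicit Arguments. Unset Strict Implicit. Unset Printing Implicit Defensive.
Import Order.TTheory GRing.Theory Num.Theory.
Local Open Scope ring_scope.

Section CauchyBinet.
Variables (R : comPzRingType) (p n : nat) (x0 : 'I_n).

(* The increasing enumeration of I; the default x0 is never reached when #|I| = p. *)
Definition sel (I : {set 'I_n}) (j : 'I_p) : 'I_n := nth x0 (enum I) j.

Section Sel.
Variables (I : {set 'I_n}) (cardI : #|I| = p).

Lemma sel_inj : injective (sel I).
Proof.
move=> i j /eqP; rewrite /sel nth_uniq ?enum_uniq -?cardE ?cardI //.
by move/eqP/val_inj.
Qed.

Lemma sel_mem j : sel I j \in I.
Proof. by rewrite /sel -mem_enum mem_nth // -cardE cardI. Qed.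

Lemma sel_index c : c \in I -> exists j, sel I j = c.
Proof.
move=> cI; have lt_c : (index c (enum I) < p)%N.
  by rewrite -cardI cardE index_mem mem_enum.
by exists (Ordinal lt_c); rewrite /sel nth_index ?mem_enum.
Qed.

End Sel.

Lemma det_mul_tr_expand (M N : 'M[R]_(p, n)) :
  \det (M *m N^T) =
  \sum_(f : {ffun 'I_p -> 'I_n}) (\prod_i M i (f i)) * \det (colsub f N).
Proof.
rewrite {1}/determinant.
under eq_bigr => s _.
  under eq_bigr => i _ do rewrite mxE.
  rewrite bigA_distr_bigA mulr_sumr.
  over.
rewrite exchange_big /=; apply: eq_bigr => f _.
rewrite -det_tr /determinant mulr_sumr; apply: eq_bigr => s _.
rewrite big_split /= mulrCA; congr (_ * (_ * _)).
by apply: eq_bigr => i _; rewrite !mxE.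
Qed.

Lemma det_colsub_noninj (N : 'M[R]_(p, n)) (f : 'I_p -> 'I_n) :
  ~~ injectiveb f -> \det (colsub f N) = 0.
Proof.
case/injectivePn => i1 [i2 ne feq]; rewrite -det_tr.
by apply: (determinant_alternate ne) => j; rewrite !mxE feq.
Qed.

Lemma det_colsub_perm (N : 'M[R]_(p, n)) (f : 'I_p -> 'I_n) (s : 'S_p) :
  \det (colsub (f \o s) N) = (-1) ^+ s * \det (colsub f N).
Proof.
have -> : colsub (f \o s) N = col_perm s (colsub f N).
  by apply/matrixP => i j; rewrite !mxE.
by rewrite col_permE det_mulmx det_perm odd_permV mulrC.
Qed.

Definition sel_perm (I : {set 'I_n}) (s : 'S_p) : {ffun 'I_p -> 'I_n} :=
  [ffun i => sel I (s i)].

Let sel_perm_pair (x : {set 'I_n} * 'S_p) := sel_perm x.1 x.2.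

Let sized_pairs := [set x : {set 'I_n} * 'S_p | #|x.1| == p].

Lemma sel_perm_image x : x \in sized_pairs -> [set sel_perm_pair x i | i : 'I_p] = x.1.
Proof.
case: x => I s; rewrite inE /= => /eqP cardI; apply/setP => c; apply/imsetP/idP.
  by case=> i _ ->; rewrite ffunE sel_mem.
case/(sel_index cardI) => j <-; exists (s^-1 j)%g => //.
by rewrite ffunE permKV.
Qed.

Lemma sel_perm_inj : {in sized_pairs &, injective sel_perm_pair}.
Proof.
move=> [I s] [J t] HI HJ eq_st.
have eIJ : I = J by rewrite -[I](sel_perm_image HI) -[J](sel_perm_image HJ) eq_st.
subst J; congr (_, _); apply/permP => i.
move: HI; rewrite inE => /eqP cardI.
have := congr1 (fun f : {ffun _ -> _} => f i) eq_st.
by rewrite !ffunE => /(sel_inj cardI).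
Qed.

Lemma sel_perm_onto :
  sel_perm_pair @: sized_pairs = [set f : {ffun 'I_p -> 'I_n} | injectiveb f].
Proof.
apply/setP => f; rewrite inE; apply/imsetP/idP.
  case=> [[I s]]; rewrite inE => /eqP cardI ->; apply/injectiveP => i j.
  by rewrite !ffunE => /(sel_inj cardI)/perm_inj.
move/injectiveP => f_inj; pose I := [set f i | i : 'I_p].
have cardI : #|I| = p by rewrite card_imset // card_ord.
have Hf i : exists j, sel I j == f i.
  have /(sel_index cardI)[j <-] : f i \in I by apply: imset_f.
  by exists j.
pose g i := xchoose (Hf i).
have selg i : sel I (g i) = f i by apply/eqP/(xchooseP (Hf i)).
have g_inj : injective g by move=> i j eg; apply: f_inj; rewrite -!selg eg.
exists (I, perm g_inj); first by rewrite inE cardI.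
by apply/ffunP => i; rewrite ffunE /= permE selg.
Qed.

Lemma cauchy_binet (M N : 'M[R]_(p, n)) :
  \det (M *m N^T) =
  \sum_(I : {set 'I_n} | #|I| == p) \det (colsub (sel I) M) * \det (colsub (sel I) N).
Proof.
rewrite det_mul_tr_expand (bigID (fun f : {ffun 'I_p -> 'I_n} => injectiveb f)) /=.
rewrite [X in _ + X]big1 ?addr0 => [|f /det_colsub_noninj ->]; last by rewrite mulr0.
rewrite (eq_bigl (fun f => f \in sel_perm_pair @: sized_pairs)); last first.
  by move=> f; rewrite sel_perm_onto inE.
rewrite big_imset /=; last exact: sel_perm_inj.
under eq_bigl => x do rewrite inE -[_ == p]andbT.
pose F I (s : 'S_p) := \prod_i M i (sel_perm I s i) * \det (colsub (sel_perm I s) N).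
rewrite -(pair_big_dep (fun I : {set 'I_n} => #|I| == p) (fun _ _ => true) F) /=.
apply: eq_bigr => I _; rewrite [\det (colsub _ M)]/determinant mulr_suml.
apply: eq_bigr => s _.
rewrite /F (_ : colsub _ N = colsub (sel I \o s) N); last first.
  by apply/matrixP => i j; rewrite !mxE ffunE.
rewrite det_colsub_perm mulrA [X in X * _]mulrC; congr (_ * _ * _).
by apply: eq_bigr => i _; rewrite !mxE ffunE.
Qed.

End CauchyBinet.

Lemma minor_colsub (R : realFieldType) p n (x0 : 'I_n) (M : 'M[R]_(p, n))
    (I : {set 'I_n}) :
  #|I| = p -> minor M I = \det (colsub (sel x0 I) M).
Proof.
move=> cardI; congr (\det _); apply/matrixP => i j.
by rewrite !mxE /colsel (nth_map x0) // -cardE cardI.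
Qed.

Lemma chow_form_det (R : realFieldType) p n (M N : 'M[R]_(p, n)) :
  chow_form M N = \det (M *m N^T).
Proof.
case: n M N => [|n] M N; last first.
  rewrite (cauchy_binet ord0) /chow_form /pluecker; apply: eq_bigr => I /eqP cardI.
  by rewrite !(minor_colsub ord0).
rewrite (thinmx0 M) mul0mx /chow_form; case: p M N => [|p] M N.
  rewrite det_mx00 (big_pred1 set0) => [|I]; last by rewrite cards_eq0.
  by rewrite /pluecker /minor !det_mx00 mulr1.
rewrite det0 big_pred0 // => I; apply/negbTE.
by have := max_card I; rewrite card_ord; lia.
Qed.

Section KernelDuality.
Variable F : fieldType.

Lemma submx_mul0 p q n r (X : 'M[F]_(p, n)) (Y : 'M[F]_(q, n)) (d : 'M[F]_(n, r)) :
  (X <= Y)%MS -> Y *m d = 0 -> X *m d = 0.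
Proof. by move=> XY /sub_kermxP Yd; apply/sub_kermxP/(submx_trans XY). Qed.

Lemma exists_kernel_vector r n (X : 'M[F]_(r, n)) :
  ~~ row_full X -> exists2 d : 'cV[F]_n, d != 0 & X *m d = 0.
Proof.
rewrite -cokermx_eq0 -trmx_eq0 => /rowV0Pn[v /submxP[u def_v] nz_v].
exists v^T; first by rewrite trmx_eq0.
by rewrite def_v trmx_mul trmxK mulmxA mulmx_coker mul0mx.
Qed.

Lemma row_full_mul0 r n (X : 'M[F]_(r, n)) (d : 'cV[F]_n) :
  row_full X -> X *m d = 0 -> d = 0.
Proof. by move=> /row_full_inj X_inj Xd; apply: X_inj; rewrite Xd mulmx0. Qed.

Lemma submx_kermx_tr p q n (N : 'M[F]_(p, n)) (N' : 'M[F]_(q, n)) :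
  (kermx N'^T <= kermx N^T)%MS -> (N <= N')%MS.
Proof.
move=> /sub_kermxP kerN'N; set W := kermx (kermx N'^T)^T.
have N'W : (N' <= W)%MS.
  by apply/sub_kermxP; rewrite -{1}[N']trmxK -trmx_mul mulmx_ker trmx0.
have NW : (N <= W)%MS.
  by apply/sub_kermxP; rewrite -{1}[N]trmxK -trmx_mul kerN'N trmx0.
have rankW : \rank W = \rank N'.
  by rewrite mxrank_ker mxrank_tr mxrank_ker mxrank_tr subKn // rank_leq_col.
have /eqmxP -> : (N' == W)%MS by rewrite -(mxrank_leqif_eq N'W) rankW.
exact: NW.
Qed.

Lemma eqmx_kermx_tr p q n (N : 'M[F]_(p, n)) (N' : 'M[F]_(q, n)) :
  (kermx N^T == kermx N'^T)%MS -> (N == N')%MS.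
Proof. by case/andP => /submx_kermx_tr N'N /submx_kermx_tr NN'; apply/andP. Qed.

Lemma det_mul_tr_neq0 p n r (M N : 'M[F]_(p, n)) (B : 'M[F]_(r, n)) :
  row_free M -> (M <= B)%MS -> (kermx N^T :&: B)%MS = 0 -> \det (M *m N^T) != 0.
Proof.
move=> free_M MB cap0; apply/eqP => det0.
have : kermx (M *m N^T) != 0 by rewrite kermx_eq0 row_free_unit unitmxE det0 unitr0.
case/rowV0Pn => u /sub_kermxP uMN nz_u.
have nz_uM : u *m M != 0.
  apply: contra nz_u => /eqP uM0; apply/eqP/(row_free_inj free_M).
  by rewrite uM0 mul0mx.
case/negP: nz_uM; rewrite -submx0 -cap0 sub_capmx (submx_trans (submxMl u M) MB) andbT.
by apply/sub_kermxP; rewrite -mulmxA.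
Qed.

Lemma transversal_cap0 k n r (V : 'M[F]_(k, n)) (B : 'M[F]_(r, n)) :
  row_full (col_mx V B) -> (\rank V + \rank B = n)%N -> (V :&: B)%MS = 0.
Proof.
move=> /eqP fullVB rankVB; apply/eqP; rewrite -mxrank_eq0.
by have := mxrank_sum_cap V B; rewrite addsmxE fullVB rankVB; lia.
Qed.

Lemma transversal_rank_ge k r n (V : 'M[F]_(k, n)) (B : 'M[F]_(r, n)) :
  row_full (col_mx V B) -> (n <= \rank V + \rank B)%N.
Proof. by move=> /eqP full; rewrite -{1}full -addsmxE; apply: mxrank_adds_leqif. Qed.

End KernelDuality.

Section Positivity.
Variable R : realFieldType.

Lemma exists_large_scale (I : finType) (P : pred I) (e f : I -> R) :
  (forall i, P i -> 0 < e i) -> exists K, forall i, P i -> 0 < K * e i + f i.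
Proof.
move=> pos_e; set S := \sum_(i | P i) `|f i| / e i.
exists (1 + S) => i Pi; have e_i := pos_e i Pi.
have : `|f i| / e i <= S.
  rewrite /S (bigD1 i) //= lerDl sumr_ge0 // => j /andP[Pj _].
  by rewrite divr_ge0 // ltW // pos_e.
move=> /(ler_wpM2r (ltW e_i)); rewrite divfK ?gt_eqF // => le_fS.
have := ler_norm (- f i); rewrite normrN mulrDl mul1r; lra.
Qed.

Lemma mulmx_tr_gt0 n (w : 'rV[R]_n) : w != 0 -> 0 < (w *m w^T) 0 0.
Proof.
move=> nz_w; rewrite mxE lt_def; have sq_ge0 j : 0 <= w 0 j * w^T j 0.
  by rewrite mxE -expr2 sqr_ge0.
rewrite sumr_ge0 // andbT; apply: contra nz_w.
move=> /eqP/(psumr_eq0P (fun j _ => sq_ge0 j)) sum0.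
apply/eqP/matrixP => i j; rewrite (ord1 i) mxE.
by have /eqP := sum0 j isT; rewrite mxE -expr2 sqrf_eq0 => /eqP.
Qed.

End Positivity.

Section Cone.
Variables (R : realFieldType) (m n : nat).
Implicit Types (A B : 'M[R]_(m, n)) (S T : {set 'I_m}) (l p q e : 'cV[R]_n).

Definition face_mx A S : 'M[R]_(m, n) :=
  \matrix_(i < m) (if i \in S then row i A else 0).

Definition face_of A l : {set 'I_m} := [set i | (A *m l) i 0 == 0].

Definition in_dual A l : Prop := forall i, 0 <= (A *m l) i 0.

Lemma mulmx_scale_addE r (X : 'M[R]_(r, n)) a l l' i :
  (X *m (a *: l + l')) i 0 = a * (X *m l) i 0 + (X *m l') i 0.
Proof. by rewrite mulmxDr -scalemxAr !mxE. Qed.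

Lemma mul_row_entry A l i : (row i A *m l) 0 0 = (A *m l) i 0.
Proof. by rewrite -row_mul mxE. Qed.

Lemma row_face_mx A S i : row i (face_mx A S) = if i \in S then row i A else 0.
Proof. exact: rowK. Qed.

Lemma face_mx_mulE A S l i :
  (face_mx A S *m l) i 0 = if i \in S then (A *m l) i 0 else 0.
Proof.
rewrite -[LHS]mul_row_entry row_face_mx.
by case: ifP => _; rewrite ?mul_row_entry // mul0mx mxE.
Qed.

Lemma face_mx_sub A S : (face_mx A S <= A)%MS.
Proof.
apply/row_subP => i; rewrite row_face_mx.
by case: ifP => _; [apply: row_sub | apply: sub0mx].
Qed.

Lemma row_sub_face_mx A S i : i \in S -> (row i A <= face_mx A S)%MS.
Proof. by move=> iS; have := row_sub i (face_mx A S); rewrite row_face_mx iS. Qed.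

Lemma face_mxS A S T : S \subset T -> (face_mx A S <= face_mx A T)%MS.
Proof.
move=> ST; apply/row_subP => i; rewrite row_face_mx.
by case: ifP => [/(subsetP ST)/row_sub_face_mx | _] //; apply: sub0mx.
Qed.

Lemma face_mx_face_of0 A : face_mx A (face_of A 0) = A.
Proof. by apply/row_matrixP => i; rewrite row_face_mx inE mulmx0 mxE eqxx. Qed.

Lemma face_mx_face_of_mul A l : face_mx A (face_of A l) *m l = 0.
Proof.
by apply/matrixP => i j; rewrite (ord1 j) face_mx_mulE inE [RHS]mxE; case: eqP.
Qed.

Lemma is_face_of A l : in_dual A l -> is_face A (face_of A l).
Proof.
move=> dual_l; exists l; split => [i|]; first by rewrite mul_row_entry.
by apply/setP => i; rewrite !inE mul_row_entry.
Qed.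

Lemma vertex_vec_sub A S w : is_vertex_vec A S w -> (w <= face_mx A S)%MS.
Proof.
case=> T [_ _ TS [j [c [jT _ _ ->]]]].
by rewrite scalemx_sub // row_sub_face_mx // (subsetP TS).
Qed.

Lemma exists_pos_nonorth A l0 (w : 'rV[R]_n) :
  (forall i, row i A != 0 -> 0 < (A *m l0) i 0) -> w != 0 ->
  exists q, (forall i, row i A != 0 -> 0 < (A *m q) i 0) /\ (w *m q) 0 0 != 0.
Proof.
move=> pos_l0 nz_w; have [wl0|] := eqVneq ((w *m l0) 0 0) 0; last by exists l0.
have [K pos_K] := exists_large_scale (fun i => (A *m w^T) i 0) pos_l0.
exists (K *: l0 + w^T); split => [i /pos_K|]; rewrite mulmx_scale_addE //.
by rewrite wl0 mulr0 add0r gt_eqF // mulmx_tr_gt0.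
Qed.

Lemma ratio_test A p e j : in_dual A p -> (A *m e) j 0 < 0 ->
  exists s, in_dual A (s *: e + p) /\
    exists2 i, (A *m e) i 0 != 0 & i \in face_of A (s *: e + p).
Proof.
move=> dual_p neg_j; pose ratio i := (A *m p) i 0 / - (A *m e) i 0.
have [i0 neg_i0 min_i0] := @arg_minP _ _ _ j (fun i => (A *m e) i 0 < 0) ratio neg_j.
set s := ratio i0; exists s.
have s_ge0 : 0 <= s by rewrite divr_ge0 // oppr_ge0 ltW.
split => [i|]; rewrite ?mulmx_scale_addE.
  have [neg_i|pos_i] := ltrP ((A *m e) i 0) 0; last first.
    by apply: addr_ge0; [apply: mulr_ge0 | apply: dual_p].
  have := min_i0 i neg_i; rewrite ler_pdivlMr ?oppr_gt0 // mulrN.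
  by rewrite -/s; lra.
exists i0; first by rewrite lt_eqF.
by rewrite inE mulmx_scale_addE /s /ratio; apply/eqP; field; rewrite lt_eqF.
Qed.

Section Vertex.
Variables (k : nat) (V : 'M[R]_(k, n)).

Lemma vertex_step A p :
  row_full (col_mx V A) -> in_dual A p ->
  ~~ row_full (col_mx V (face_mx A (face_of A p))) ->
  exists p', [/\ in_dual A p', V *m p' = V *m p &
    (\rank (col_mx V (face_mx A (face_of A p))) <
     \rank (col_mx V (face_mx A (face_of A p'))))%N].
Proof.
move=> full_VA dual_p; set T := face_of A p; set X := col_mx V (face_mx A T).
case/exists_kernel_vector => d nz_d; rewrite mul_col_mx => /eqP.
rewrite col_mx_eq0 => /andP[/eqP Vd /eqP Td].
have [j nz_j] : exists j, (A *m d) j 0 != 0.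
  case: (pickP (fun j => (A *m d) j 0 != 0)) => [j nz_j | Ad0]; first by exists j.
  case/eqP: nz_d; apply: (row_full_mul0 full_VA); rewrite mul_col_mx Vd.
  suff -> : A *m d = 0 by rewrite col_mx0.
  by apply/matrixP => i i'; rewrite (ord1 i') [RHS]mxE; apply/eqP/negbFE; apply: Ad0.
have [e [Ve Te neg_e]] :
    exists e, [/\ V *m e = 0, face_mx A T *m e = 0 & (A *m e) j 0 < 0].
  have [neg|pos] := ltrP ((A *m d) j 0) 0; first by exists d.
  by exists (- d); rewrite !mulmxN Vd Td !oppr0 mxE oppr_lt0 lt_def nz_j pos.
have [s [dual_p' [i0 nz_i0 i0_face]]] := ratio_test dual_p neg_e.
exists (s *: e + p); split => //; first by rewrite mulmxDr -scalemxAr Ve scaler0 add0r.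
have eT i : i \in T -> (A *m e) i 0 = 0.
  by move=> iT; have := face_mx_mulE A T e i; rewrite Te iT [X in X = _]mxE.
have TT' : T \subset face_of A (s *: e + p).
  apply/subsetP => i iT; rewrite inE mulmx_scale_addE eT // mulr0 add0r.
  by move: iT; rewrite inE.
have XX' : (X <= col_mx V (face_mx A (face_of A (s *: e + p))))%MS.
  by rewrite -!addsmxE addsmxS ?face_mxS.
rewrite (ltn_leqif (mxrank_leqif_sup XX')); apply/negP => X'X.
have i0X : (row i0 A <= X)%MS.
  apply: submx_trans (row_sub_face_mx A i0_face) (submx_trans _ X'X).
  by rewrite -addsmxE addsmxSr.
have Xe : X *m e = 0 by rewrite mul_col_mx Ve Te col_mx0.
have /matrixP/(_ 0 0) := submx_mul0 i0X Xe.
by rewrite mul_row_entry [RHS]mxE; apply/eqP.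
Qed.

Lemma exists_vertex A p : row_full (col_mx V A) -> in_dual A p ->
  exists g, [/\ in_dual A g, row_full (col_mx V (face_mx A (face_of A g))) &
                V *m g = V *m p].
Proof.
move=> full_VA.
suff gen r p' : in_dual A p' -> V *m p' = V *m p ->
    (n - \rank (col_mx V (face_mx A (face_of A p'))))%N = r ->
  exists g, [/\ in_dual A g, row_full (col_mx V (face_mx A (face_of A g))) &
                V *m g = V *m p].
  by move=> dual_p; apply: (gen _ p dual_p erefl erefl).
elim/ltn_ind: r p' => r IH p' dual_p' Vp' def_r.
have [full|nfull] := boolP (row_full (col_mx V (face_mx A (face_of A p')))).
  by exists p'.
have [p'' [dual_p'' Vp'' lt_rank]] := vertex_step full_VA dual_p' nfull.
apply: (IH _ _ p'' dual_p'' (etrans Vp'' Vp') erefl); rewrite -def_r.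
have := rank_leq_col (col_mx V (face_mx A (face_of A p''))); move: lt_rank nfull.
rewrite /row_full; lia.
Qed.

Lemma face_descent A l : pointed_gens A -> in_dual A l ->
  row_full (col_mx V (face_mx A (face_of A l))) ->
  (n < \rank V + \rank (face_mx A (face_of A l)))%N ->
  exists l', [/\ in_dual A l', row_full (col_mx V (face_mx A (face_of A l'))) &
    (\rank (face_mx A (face_of A l')) < \rank (face_mx A (face_of A l)))%N].
Proof.
case=> l0 pos_l0 dual_l; set T := face_of A l; set B := face_mx A T.
move=> full_VB big_rank.
have [w [wV wB nz_w]] : exists w : 'rV_n, [/\ (w <= V)%MS, (w <= B)%MS & w != 0].
  have : (V :&: B)%MS != 0.
    rewrite -mxrank_eq0; have := mxrank_sum_cap V B.
    by rewrite addsmxE (eqP full_VB); lia.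
  by case/rowV0Pn => w; rewrite sub_capmx => /andP[wV wB] nz_w; exists w.
have [q [pos_q wq]] : exists q, (forall i, row i A != 0 -> 0 < (A *m q) i 0) /\
    (w *m q) 0 0 != 0.
  by apply: exists_pos_nonorth nz_w => i; rewrite -mul_row_entry; apply: pos_l0.
have dual_Bq : in_dual B q.
  move=> i; rewrite face_mx_mulE; case: ifP => // _.
  have [Ai0|/pos_q/ltW //] := eqVneq (row i A) 0.
  by rewrite -mul_row_entry Ai0 mul0mx mxE.
have [g [dual_g full_g Vg]] := exists_vertex full_VB dual_Bq.
have pos_off i : i \notin T -> 0 < (A *m l) i 0.
  by rewrite inE lt_def => ->; apply: dual_l.
have [K pos_K] := exists_large_scale (fun i => (A *m g) i 0) pos_off.
have lT i : i \in T -> (A *m l) i 0 = 0 by rewrite inE => /eqP.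
have face_l' : face_mx A (face_of A (K *: l + g)) = face_mx B (face_of B g).
  apply/row_matrixP => i; rewrite !row_face_mx [i \in face_of A _]inE.
  rewrite [i \in face_of B _]inE mulmx_scale_addE face_mx_mulE.
  have [iT|iT] := boolP (i \in T); first by rewrite lT // mulr0 add0r.
  by rewrite gt_eqF ?pos_K ?eqxx.
exists (K *: l + g); rewrite face_l'; split => //.
  move=> i; rewrite mulmx_scale_addE; have [iT|/pos_K/ltW //] := boolP (i \in T).
  by rewrite lT // mulr0 add0r; have := dual_g i; rewrite face_mx_mulE iT.
rewrite (ltn_leqif (mxrank_leqif_sup (face_mx_sub _ _))); apply/negP => BB'.
have wg : w *m g = 0 := submx_mul0 (submx_trans wB BB') (face_mx_face_of_mul B g).
have wgq : w *m g = w *m q by case/submxP: wV => D ->; rewrite -!mulmxA Vg.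
by move: wq; rewrite -wgq wg mxE eqxx.
Qed.

Lemma exists_transversal_face A : pointed_gens A -> row_full A ->
  exists l, [/\ in_dual A l, row_full (col_mx V (face_mx A (face_of A l))) &
                \rank (face_mx A (face_of A l)) = (n - \rank V)%N].
Proof.
move=> pointed full_A.
suff gen r l : in_dual A l -> row_full (col_mx V (face_mx A (face_of A l))) ->
    \rank (face_mx A (face_of A l)) = r ->
  exists l, [/\ in_dual A l, row_full (col_mx V (face_mx A (face_of A l))) &
                \rank (face_mx A (face_of A l)) = (n - \rank V)%N].
  apply: (gen _ 0 _ _ erefl) => [i|]; first by rewrite mulmx0 mxE.
  rewrite face_mx_face_of0 -sub1mx (submx_trans _ (_ : A <= col_mx V A)%MS) ?sub1mx //.
  by rewrite -addsmxE addsmxSr.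
elim/ltn_ind: r l => r IH l dual_l full_l rank_l.
have := transversal_rank_ge full_l; rewrite leq_eqVlt => /orP[/eqP rank_eq|big_rank].
  by exists l; split => //; lia.
have [l' [dual_l' full_l' lt_rank]] := face_descent pointed dual_l full_l big_rank.
by apply: (IH _ _ l' dual_l' full_l' erefl); rewrite -rank_l.
Qed.

End Vertex.
End Cone.

Theorem lemma2p7 (R : realFieldType) (n m k : nat) (A : 'M[R]_(m, n))
    (M : {set 'I_m} -> 'M[R]_(n - k, n)) :
  pointed_gens A -> full_dim A -> (1 <= k <= n)%N ->
  chow_choice A M ->
  forall V : 'M[R]_n, \rank V = k ->
  forall N : 'M[R]_(n - k, n), (kerN N == V)%MS ->
    (exists S : {set 'I_m},
        [/\ is_face A S, face_rank A S = (n - k)%N & chow_form (M S) N != 0])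
    /\
    (forall N' : 'M[R]_(n - k, n), (kerN N' == V)%MS ->
       exists2 c : R, c != 0 &
         forall S : {set 'I_m}, is_face A S -> face_rank A S = (n - k)%N ->
           chow_form (M S) N' = c * chow_form (M S) N).
Proof.
move=> pointed full_A /andP[_ le_kn] choice V rankV N kerNV; split.
  have [l [dual_l full_Vl rank_l]] :=
    exists_transversal_face V pointed (introT eqP full_A).
  rewrite rankV in rank_l; have face_l := is_face_of dual_l.
  have [free_M vert_M] := choice _ face_l rank_l.
  exists (face_of A l); split => //; rewrite chow_form_det.
  apply: (det_mul_tr_neq0 free_M).
    by apply/row_subP => r; apply: vertex_vec_sub.
  apply/eqP; rewrite -submx0 -(transversal_cap0 full_Vl); last first.
    by rewrite rank_l rankV subnKC.
  by rewrite capmxS // (eqmxP kerNV).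
move=> N' kerN'V; have /eqmxMunitP[G unit_G ->] : (N' == N)%MS.
  apply/eqmx_kermx_tr/eqmxP.
  exact: eqmx_trans (eqmxP kerN'V) (eqmx_sym (eqmxP kerNV)).
exists (\det G) => [|S _ _]; first by rewrite -unitfE -unitmxE.
by rewrite !chow_form_det trmx_mul mulmxA det_mulmx det_tr mulrC.
Qed.
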